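(* Let $\mathcal{M}=(M_i\colon i\in K)$ be a tight family of matroids on a common ground set $E$. Then every covering $(R_i\colon i\in K)$ of $\mathcal{M}$ is a partitioning of $\mathcal{M}$, i.e. the sets $R_i$ are pairwise disjoint, their union is $E$, and each $R_i$ is a base of $M_i$.
   Context: Matroids here are possibly infinite (given by independence axioms: $\emptyset$ independent, subsets of independent sets independent, the augmentation axiom relative to maximal independent sets, and that every independent subset of any $X\subseteq E$ extends to a maximal independent subset of $X$). Bases are maximal independent sets; circuits minimal dependent sets; $X$ spans $e$ if $e\in X$ or some circuit $C\ni e$ has $C\setminus\{e\}\subseteq X$; $S$ is spanning if it spans all of $E$. A covering of $\mathcal{M}$ is a family $(R_i\colon i\in K)$ with $R_i$ independent in $M_i$ and $\bigcup_i R_i=E$. The family $\mathcal{M}$ is tight if it admits a covering and for every covering $(R_i\colon i\in K)$ each $R_i$ is spanning in $M_i$. *)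

(* Sets over a ground type E are predicates E -> Prop;
   the ground set of every matroid is the whole type E. *)

Definition set (E : Type) := E -> Prop.

Definition subset {E : Type} (A B : set E) : Prop := forall x, A x -> B x.

Definition set0 {E : Type} : set E := fun _ => False.

Definition add1 {E : Type} (A : set E) (e : E) : set E := fun x => A x \/ x = e.

Definition maximal_in {E : Type} (P : set E -> Prop) (A : set E) : Prop :=
  P A /\ forall B, P B -> subset A B -> subset B A.

Record matroid (E : Type) := Matroid {
  indep : set E -> Prop;
  indep_empty : indep set0;
  indep_subset : forall I J, indep J -> subset I J -> indep I;
  indep_augment : forall I B,
      indep I -> ~ maximal_in indep I -> maximal_in indep B ->
      exists x, B x /\ ~ I x /\ indep (add1 I x);
  indep_maximal : forall I X, indep I -> subset I X ->
      exists J, maximal_in (fun J => indep J /\ subset I J /\ subset J X) J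
}.

Arguments indep {E} m _.

Definition base {E : Type} (M : matroid E) (B : set E) : Prop :=
  maximal_in (indep M) B.

Definition circuit {E : Type} (M : matroid E) (C : set E) : Prop :=
  ~ indep M C /\ forall D, subset D C -> ~ subset C D -> indep M D.

Definition spans {E : Type} (M : matroid E) (X : set E) (e : E) : Prop :=
  X e \/ exists C, circuit M C /\ C e /\ forall x, C x -> x <> e -> X x.

Definition spanning {E : Type} (M : matroid E) (S : set E) : Prop :=
  forall e, spans M S e.

Definition covering {E K : Type} (M : K -> matroid E) (R : K -> set E) : Prop :=
  (forall i, indep (M i) (R i)) /\ (forall e, exists i, R i e).

Definition tight {E K : Type} (M : K -> matroid E) : Prop :=
  (exists R, covering M R) /\
  (forall R, covering M R -> forall i, spanning (M i) (R i)).

Definition partitioning {E K : Type} (M : K -> matroid E) (R : K -> set E) : Prop :=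
  (forall i j, i <> j -> forall e, R i e -> R j e -> False) /\
  (forall e, exists i, R i e) /\
  (forall i, base (M i) (R i)).

From Stdlib Require Import Classical.

(* An element [e] outside [S] is spanned by [S] only through a circuit inside [S + e];
   so it is never spanned when [S + e] lies in an independent set.  Removing one
   element of [R i] that is also covered by [R j] keeps a covering, so tightness
   forces the smaller [R i] to span it, which is impossible; and an independent
   spanning set is a base for the same reason. *)

Lemma indep_not_spans {E : Type} (M : matroid E) (S X : set E) (e : E) :
  indep M X -> subset S X -> X e -> ~ S e -> ~ spans M S e.
Proof.
  intros HX HSX HXe HSe [HS | [C [[HCdep _] [HCe HCS]]]]; [contradiction|].
  apply HCdep, (indep_subset _ M C X HX).
  intros x HCx. destruct (classic (x = e)) as [-> | Hxe]; auto.
Qed.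

Lemma indep_spanning_base {E : Type} (M : matroid E) (S : set E) :
  indep M S -> spanning M S -> base M S.
Proof.
  intros HS Hspan. split; [exact HS|].
  intros B HB HSB x HBx. apply NNPP. intro HSx.
  exact (indep_not_spans M S B x HB HSB HBx HSx (Hspan x)).
Qed.

Definition delete_at {E K : Type} (R : K -> set E) (i : K) (e : E) : K -> set E :=
  fun k x => R k x /\ (k = i -> x <> e).

Lemma covering_delete_at {E K : Type} (M : K -> matroid E) (R : K -> set E)
    (i j : K) (e : E) :
  covering M R -> i <> j -> R j e -> covering M (delete_at R i e).
Proof.
  intros [HRind HRcov] Hij HRje. split.
  - intro k. apply (indep_subset _ (M k) _ (R k) (HRind k)). intros x [Hx _]; exact Hx.
  - intro x. destruct (classic (x = e)) as [-> | Hxe].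
    + exists j. split; [exact HRje|]. intros ->. contradiction.
    + destruct (HRcov x) as [k Hk]. exists k. split; auto.
Qed.

Lemma tight_covering_disjoint {E K : Type} (M : K -> matroid E) (R : K -> set E) :
  tight M -> covering M R ->
  forall i j, i <> j -> forall e, R i e -> R j e -> False.
Proof.
  intros [_ Htight] HR i j Hij e HRie HRje.
  apply (indep_not_spans (M i) (delete_at R i e i) (R i) e (proj1 HR i)).
  - intros x [Hx _]; exact Hx.
  - exact HRie.
  - intros [_ Hne]. exact (Hne eq_refl eq_refl).
  - exact (Htight _ (covering_delete_at M R i j e HR Hij HRje) i e).
Qed.

Theorem proposition3p3 (E K : Type) (M : K -> matroid E) :
  tight M -> forall R : K -> set E, covering M R -> partitioning M R.
Proof.
  intros Htight R HR. split; [|split].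
  - exact (tight_covering_disjoint M R Htight HR).
  - exact (proj2 HR).
  - intro i. apply indep_spanning_base; [exact (proj1 HR i)|].
    exact (proj2 Htight R HR i).
Qed.
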